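(* Let $R$, $G$, $*$, $\sigma$ and $\mathcal{S}$ be as in the context, and suppose $\mathcal{S}$ is anticommutative. If $*$ is not the identity map on $G$, then: - $\operatorname{char}(R)=4$; - for every $x\in G\setminus G_*$ we have $xx^*=x^*x$ and $x^2\in G_*$.
   Context: Throughout, $R$ is a commutative ring with unity with $\operatorname{char}(R)\neq 2$, and $\mathcal{U}(R)$ is its unit group. $G$ is a group with an involution $*$, i.e. a map $x\mapsto x^*$ with $(xy)^*=y^*x^*$ and $(x^* )^*=x$. The map $\sigma:G\to\mathcal{U}(R)$ is a nontrivial group homomorphism with kernel $N=\ker\sigma$, and it is compatible with $*$: $xx^*\in N$ for all $x\in G$. The group ring $RG$ carries the involution $\left(\sum_{x\in G}\alpha_x x\right)^{\sigma*}=\sum_{x\in G}\sigma(x)\alpha_x x^*$. Write $G_*=\{x\in G: x^*=x\}$ and $N_*=G_*\cap N$. Let $\mathcal{S}$ be the $R$-submodule of $RG$ spanned by the union of the following three sets: - $2\mathcal{S}_1=\{2x: x\in N_*\}$; - $\mathcal{S}_2=\{\alpha x: x\in G_*\setminus N,\ \alpha\in R,\ \alpha(1-\sigma(x))=0\}$; - $\mathcal{S}_3=\{x+\sigma(x)x^*: x\in G\setminus G_*\}$. $\mathcal{S}$ is called anticommutative if $ab+ba=0$ for all $a,b\in\mathcal{S}$. *)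

From HB Require Import structures.
From mathcomp Require Import all_boot all_order all_algebra.
From mathcomp Require Import monoid.
Set Implicit Arguments. Unset Strict Implicit. Unset Printing Implicit Defensive.
Import GRing.Theory.
Local Open Scope ring_scope.

Definition ring_char_is (R : nzRingType) (n : nat) : Prop :=
  if n is 0 then forall m : nat, (0 < m)%N -> m%:R != 0 :> R
  else n%:R = 0 :> R /\ forall m : nat, (0 < m < n)%N -> m%:R != 0 :> R.

(* An element of RG is represented by a formal finite R-linear combination
   of group elements, i.e. a list of (coefficient, group element) pairs;
   two representatives denote the same element of RG iff they have the same
   coefficient at every g in G. *)
Definition grpring (R : nzRingType) (G : groupType) := seq (R * G).

Section GroupRing.
Variables (R : nzRingType) (G : groupType).

Definition rg_coef (a : grpring R G) (g : G) : R :=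
  \sum_(p <- a | p.2 == g) p.1.

Definition rg_eq (a b : grpring R G) : Prop :=
  forall g : G, rg_coef a g = rg_coef b g.

Definition rg_add (a b : grpring R G) : grpring R G := a ++ b.

Definition rg_mul (a b : grpring R G) : grpring R G :=
  [seq (p.1 * q.1, (p.2 * q.2)%g) | p <- a, q <- b].

Definition rg_scale (r : R) (a : grpring R G) : grpring R G :=
  [seq (r * p.1, p.2) | p <- a].

Definition rg_term (r : R) (x : G) : grpring R G := [:: (r, x)].

End GroupRing.

Section SetS.
Variables (R : comUnitRingType) (G : groupType)
          (star : G -> G) (sigma : G -> R).

Definition S_gen (a : grpring R G) : Prop :=
  (exists x : G, star x = x /\ sigma x = 1 /\ a = rg_term 2%:R x)
  \/ (exists (x : G) (alpha : R),
        star x = x /\ sigma x != 1 /\ alpha * (1 - sigma x) = 0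
        /\ a = rg_term alpha x)
  \/ (exists x : G, star x != x /\
        a = rg_add (rg_term 1 x) (rg_term (sigma x) (star x))).

Inductive in_S : grpring R G -> Prop :=
  | in_S0 : in_S [::]
  | in_S_cons (r : R) (s a : grpring R G) :
      S_gen s -> in_S a -> in_S (rg_add (rg_scale r s) a)
  | in_S_eq (a b : grpring R G) : rg_eq a b -> in_S a -> in_S b.

Definition S_anticommutative : Prop :=
  forall a b : grpring R G, in_S a -> in_S b ->
    rg_eq (rg_add (rg_mul a b) (rg_mul b a)) [::].

End SetS.

(* Take x with y := x^* <> x and put a := x + sigma(x) y, an element of S_3.
   Since 1 is a symmetric element of N, 2 = 2.1 lies in S, and
   anticommutativity of 2 and a gives 4a = 0; the coefficient of x yields 4 = 0.
   Anticommutativity of a with itself gives 2a^2 = 0, where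
   a^2 = x^2 + sigma(x) xy + sigma(x) yx + sigma(x)^2 y^2.
   If xy <> yx, the coefficient of xy in 2a^2 is 2 sigma(x), a unit multiple
   of 2 <> 0; if y^2 <> x^2, the coefficient of x^2 is 2. *)

From HB Require Import structures.
From mathcomp Require Import all_boot all_order all_algebra.
From mathcomp Require Import monoid.
Import GRing.Theory.
Local Open Scope ring_scope.

Section GroupRingCoef.
Variables (R : nzRingType) (G : groupType).

Lemma rg_coef_nil (g : G) : rg_coef ([::] : grpring R G) g = 0.
Proof. by rewrite /rg_coef big_nil. Qed.

Lemma rg_coef_cons c (h g : G) (a : grpring R G) :
  rg_coef ((c, h) :: a) g = (if h == g then c else 0) + rg_coef a g.
Proof. by rewrite /rg_coef big_cons /=; case: (h == g); rewrite ?add0r. Qed.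

Lemma rg_coef_add (a b : grpring R G) (g : G) :
  rg_coef (rg_add a b) g = rg_coef a g + rg_coef b g.
Proof. by rewrite /rg_coef big_cat. Qed.

End GroupRingCoef.

Lemma natr2_neq0 {R : nzRingType} : ~ ring_char_is R 2 -> 2%:R != 0 :> R.
Proof.
move=> not_char2; apply/eqP => two0; apply: not_char2; split=> // m.
by case: m => [|[|m]] //= _; rewrite oner_neq0.
Qed.

Lemma ring_char_is4 {R : nzRingType} :
  2%:R != 0 :> R -> 4%:R = 0 :> R -> ring_char_is R 4.
Proof.
move=> two_neq0 four0; split=> // -[|[|[|[|m]]]] //= _; first exact: oner_neq0.
apply: contra_neq (@oner_neq0 R) => three0.
by rewrite -[1](addKr 3%:R) natr1 four0 three0 oppr0 addr0.
Qed.

Lemma unit_mulrn2_neq0 {R : unitRingType} (r : R) :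
  2%:R != 0 :> R -> r \is a GRing.unit -> r *+ 2 != 0.
Proof.
move=> two_neq0 ur; rewrite -mulr_natr; apply: contraNneq two_neq0 => r2_0.
by rewrite -(mulKr ur 2%:R) r2_0 mulr0.
Qed.

Lemma eqg_mul2l {G : groupType} (t y z : G) : (t * y == t * z)%g = (y == z).
Proof. by rewrite (inj_eq (mulgI t)). Qed.

Lemma eqg_mul2r {G : groupType} (t y z : G) : (y * t == z * t)%g = (y == z).
Proof. by rewrite (inj_eq (mulIg t)). Qed.

Lemma star1 {G : groupType} {star : G -> G} :
  (forall x y : G, star (x * y)%g = (star y * star x)%g) -> star 1%g = 1%g.
Proof.
move=> star_mul; apply: (mulgI (star 1%g)).
by rewrite -star_mul !mulg1.
Qed.

Section AnticommutativeS.
Context {R : comUnitRingType} {G : groupType} {star : G -> G} {sigma : G -> R}.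
Hypothesis star_mul : forall x y : G, star (x * y)%g = (star y * star x)%g.
Hypothesis sigma_compat : forall x : G, sigma (x * star x)%g = 1.
Hypothesis hanti : S_anticommutative star sigma.

Lemma in_S_gen (s : grpring R G) : S_gen star sigma s -> in_S star sigma s.
Proof.
move=> gen_s; apply: (in_S_eq (a := rg_add (rg_scale 1 s) [::])).
  move=> g; rewrite /rg_add cats0 /rg_coef big_map.
  by apply: eq_bigr => p _; rewrite mul1r.
by apply: in_S_cons => //; apply: in_S0.
Qed.

Lemma in_S_two : in_S star sigma (rg_term 2%:R 1%g).
Proof.
apply: in_S_gen; left; exists 1%g; rewrite (star1 star_mul); split=> //.
by rewrite -(sigma_compat 1%g) (star1 star_mul) mulg1.
Qed.

Lemma in_S_sym {x} :
  star x != x -> in_S star sigma (rg_add (rg_term 1 x) (rg_term (sigma x) (star x))).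
Proof. by move=> xNsym; apply: in_S_gen; right; right; exists x. Qed.

Lemma anticomm_coef {a b} : in_S star sigma a -> in_S star sigma b ->
  forall g, rg_coef (rg_mul a b) g + rg_coef (rg_mul b a) g = 0.
Proof. by move=> Sa Sb g; rewrite -rg_coef_add (hanti _ _ Sa Sb) rg_coef_nil. Qed.

Lemma sq_coef_mulrn2 {a} :
  in_S star sigma a -> forall g, rg_coef (rg_mul a a) g *+ 2 = 0.
Proof. by move=> Sa g; rewrite mulr2n anticomm_coef. Qed.

End AnticommutativeS.

Theorem lemma3p3 (R : comUnitRingType) (G : groupType)
  (star : G -> G) (sigma : G -> R)
  (hchar : ~ ring_char_is R 2)
  (star_mul : forall x y : G, star (x * y)%g = (star y * star x)%g)
  (star_inv : forall x : G, star (star x) = x)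
  (sigma_unit : forall x : G, sigma x \is a GRing.unit)
  (sigma_mul : forall x y : G, sigma (x * y)%g = sigma x * sigma y)
  (sigma_nontriv : exists x : G, sigma x != 1)
  (sigma_compat : forall x : G, sigma (x * star x)%g = 1)
  (hanti : S_anticommutative star sigma)
  (star_nonid : exists x : G, star x != x) :
  ring_char_is R 4 /\
  (forall x : G, star x != x ->
     (x * star x)%g = (star x * x)%g /\ star (x * x)%g = (x * x)%g).
Proof.
have two_neq0 := natr2_neq0 hchar.
have [x0 x0Nsym] := star_nonid.
split.
  apply: ring_char_is4 => //.
  have := anticomm_coef hanti (in_S_two star_mul sigma_compat) (in_S_sym x0Nsym) x0.
  rewrite /= !rg_coef_cons rg_coef_nil !mul1g !mulg1 eqxx (negbTE x0Nsym).
  by rewrite !addr0 !mulr1 !mul1r -natrD.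
move=> x xNsym; have a2_coef := sq_coef_mulrn2 hanti (in_S_sym xNsym).
have sx_x := negbTE xNsym; have x_sx : (x == star x) = false by rewrite eq_sym.
split; apply/eqP.
  have /eqP := a2_coef (x * star x)%g; apply: contraTT => xNnormal.
  rewrite /= !rg_coef_cons rg_coef_nil /= !eqg_mul2l !eqg_mul2r ?sx_x ?x_sx eqxx.
  rewrite [(star x * x == _)%g]eq_sym (negbTE xNnormal).
  by rewrite !mul1r !add0r !addr0 unit_mulrn2_neq0.
have /eqP := a2_coef (x * x)%g; apply: contraTT => xNsq.
rewrite /= !rg_coef_cons rg_coef_nil /= !eqg_mul2l !eqg_mul2r sx_x eqxx.
by rewrite -star_mul (negbTE xNsq) !mul1r !add0r !addr0 unit_mulrn2_neq0 ?unitr1.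
Qed.
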